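(* Let $\mathcal H$ be a family of graphs. The following are equivalent: (i) there is a constant $c=c(\mathcal H)$ such that every connected $\mathcal H$-free graph $G$ has fewer than $c$ vertices $v$ for which $G[N(v)]$ has at least $2$ connected components; (ii) there is a positive integer $n$ such that $\mathcal H\le \{K_n^*,\ K_{1,n}^*,\ P_n,\ K_{2,n},\ CK_n,\ T_n\}$.
   Context: All graphs are finite, simple, undirected. For graphs $H_1,H_2$, write $H_1\prec H_2$ if $H_2$ contains an induced subgraph isomorphic to $H_1$. A graph $G$ is $\mathcal H$-free if no $H\in\mathcal H$ satisfies $H\prec G$. For families $\mathcal H_1,\mathcal H_2$, write $\mathcal H_1\le\mathcal H_2$ if for every $H_2\in\mathcal H_2$ there is $H_1\in\mathcal H_1$ with $H_1\prec H_2$. $N(v)$ is the neighborhood of $v$ and $G[S]$ the induced subgraph. $K_n$, $E_n$, $P_n$ are the complete graph, edgeless graph, and path on $n$ vertices; $K_{s,t}$ is the complete bipartite graph; $G_1+G_2$ is the join (disjoint union plus all edges between $V(G_1)$ and $V(G_2)$). $K_{1,n}^*$ is obtained from the star $K_{1,n}$ by attaching a new pendant vertex to each leaf; $K_n^*$ is obtained from $K_n$ by attaching a new pendant vertex to each vertex; $CK_n$ is obtained from two disjoint copies of $K_n$ by adding a perfect matching between them; $T_n$ is obtained from the join $K_n+E_n$ by adding one new vertex adjacent to exactly the $n$ vertices of $E_n$. *)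

From mathcomp Require Import all_boot all_order.
Set Implicit Arguments. Unset Strict Implicit. Unset Printing Implicit Defensive.

Record graph := Graph {
  gV :> finType;
  gE : rel gV;
  gsym : symmetric gE;
  girr : irreflexive gE }.

Definition sgrel (T : finType) (r : rel T) : rel T :=
  fun x y => (x != y) && (r x y || r y x).

Lemma sgrel_sym (T : finType) (r : rel T) : symmetric (sgrel r).
Proof. by move=> x y; rewrite /sgrel eq_sym orbC. Qed.

Lemma sgrel_irr (T : finType) (r : rel T) : irreflexive (sgrel r).
Proof. by move=> x; rewrite /sgrel eqxx. Qed.

Definition mkgraph (T : finType) (r : rel T) : graph :=
  @Graph T (sgrel r) (@sgrel_sym T r) (@sgrel_irr T r).

Definition induced_sub (H1 H2 : graph) : Prop :=
  exists f : gV H1 -> gV H2, injective f /\ forall x y, gE (f x) (f y) = gE x y.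

Definition gfamily := graph -> Prop.

Definition Hfree (F : gfamily) (G : graph) : Prop :=
  forall H, F H -> ~ induced_sub H G.

Definition family_le (F1 F2 : gfamily) : Prop :=
  forall H2, F2 H2 -> exists2 H1, F1 H1 & induced_sub H1 H2.

Definition connected (G : graph) : Prop := forall x y : G, connect (@gE G) x y.

Definition nbhd (G : graph) (v : G) : {set G} := [set u | gE v u].

Definition nbhd_rel (G : graph) (v : G) : rel G :=
  fun x y => [&& gE x y, x \in nbhd v & y \in nbhd v].

(* G[N(v)] has at least 2 connected components: two vertices of N(v)
   not joined by a path inside G[N(v)]. *)
Definition multi_comp_nbhd (G : graph) (v : G) : bool :=
  [exists u : G, exists w : G,
     [&& u \in nbhd v, w \in nbhd v & ~~ connect (nbhd_rel v) u w]].

(* K_n^* : inl i = clique vertex i, inr i = its pendant vertex *)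
Definition Kstar_r n : rel ('I_n + 'I_n)%type := fun x y =>
  match x, y with
  | inl _, inl _ => true
  | inl i, inr j => i == j
  | _, _ => false
  end.
Definition Kstar n : graph := mkgraph (@Kstar_r n).

(* K_{1,n}^* : None = centre, inl i = leaf i, inr i = pendant of leaf i *)
Definition K1star_r n : rel (option ('I_n + 'I_n)) := fun x y =>
  match x, y with
  | None, Some (inl _) => true
  | Some (inl i), Some (inr j) => i == j
  | _, _ => false
  end.
Definition K1star n : graph := mkgraph (@K1star_r n).

Definition P_r n : rel 'I_n := fun i j => j == i.+1 :> nat.
Definition Pn n : graph := mkgraph (@P_r n).

Definition K2n_r n : rel ('I_2 + 'I_n)%type := fun x y =>
  match x, y with
  | inl _, inr _ => true
  | _, _ => false
  end.
Definition K2n n : graph := mkgraph (@K2n_r n).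

(* CK_n : two copies of K_n plus the perfect matching inl i -- inr i *)
Definition CK_r n : rel ('I_n + 'I_n)%type := fun x y =>
  match x, y with
  | inl _, inl _ => true
  | inr _, inr _ => true
  | inl i, inr j => i == j
  | _, _ => false
  end.
Definition CK n : graph := mkgraph (@CK_r n).

(* T_n : K_n + E_n (inl = K_n part, inr = E_n part), plus None adjacent to E_n *)
Definition T_r n : rel (option ('I_n + 'I_n)) := fun x y =>
  match x, y with
  | Some (inl _), Some (inl _) => true
  | Some (inl _), Some (inr _) => true
  | None, Some (inr _) => true
  | _, _ => false
  end.
Definition Tn n : graph := mkgraph (@T_r n).

Definition special_family (n : nat) : gfamily := fun G =>
  G = Kstar n \/ G = K1star n \/ G = Pn n \/ G = K2n n \/ G = CK n \/ G = Tn n.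

(* (i) => (ii): with n = c + 2, each of the six graphs is connected and has at
   least c vertices whose neighbourhood is disconnected, so it cannot be H-free.

   (ii) => (i): let G be connected and free of the six graphs with parameter n.
   Call a "pendant fan" a vertex z with spokes a_i adjacent to z and pendants
   q(a_i) adjacent to a_i only among z and the spokes; by Ramsey, a large pendant
   fan contains an induced K_{1,n}^*, K_n^* or CK_n.
   - Every vertex u has few neighbours v with G[N(v)] disconnected: pick p(v) in
     N(v) outside the component of u. By Ramsey, either some p(v) sees n
     independent such v, giving K_{2,n} together with u, or the v form a pendant
     fan at u with pendants p(v).
   - A set X into which every vertex has few neighbours is small: a BFS tree of G
     has depth < n (no induced P_n), and a vertex with many descendants in X
     whose children each have few has, by a minimal cover, many children with
     private descendants; those outside X, with the grandchildren leading to
     their private descendants, form a pendant fan.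
   The second bound, applied to the vertices with disconnected neighbourhood,
   concludes by the first. *)

From mathcomp Require Import all_boot all_order zify.
From Stdlib Require Import Classical.
Set Implicit Arguments. Unset Strict Implicit. Unset Printing Implicit Defensive.

(** * Ramsey's theorem for sequences *)

Section Ramsey.
Variable T : eqType.

Lemma ramsey_pairwise (r : rel T) a b (s : seq T) : 2 ^ (a + b) <= size s ->
  exists2 t, subseq t s &
    (pairwise r t /\ a <= size t) \/ (pairwise (fun x y => ~~ r x y) t /\ b <= size t).
Proof.
elim: a b s => [|a IHa] b s hs; first by exists [::]; [exact: sub0seq | left].
elim: b s hs => [|b IHb] s hs; first by exists [::]; [exact: sub0seq | right].
case: s hs => [|x s] hs; first by rewrite /= leqn0 expn_eq0 in hs.
have sub_cons p t : subseq t (filter p s) -> subseq t (x :: s).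
  by move=> st; apply: subseq_trans st (subseq_trans (filter_subseq p s) (subseq_cons s x)).
have cons_sub p t : subseq t (filter p s) -> subseq (x :: t) (x :: s).
  by move=> st; rewrite /= eqxx; apply: subseq_trans st (filter_subseq p s).
have all_filter p t : subseq t (filter p s) -> all p t.
  by move=> st; apply/allP => y /(mem_subseq st); rewrite mem_filter => /andP[].
have [hr|hnr] : 2 ^ (a + b.+1) <= size (filter (r x) s) \/
                2 ^ (a.+1 + b) <= size (filter (predC (r x)) s).
- have := count_predC (r x) s; rewrite -!size_filter.
  move: hs; rewrite /= !addnS !addSn !expnS; lia.
- have [t st [[rt ka]|[nrt bt]]] := IHa _ _ hr.
  + exists (x :: t); first exact: cons_sub st.
    by left; rewrite pairwise_cons (all_filter _ _ st) rt.
  + by exists t; [exact: sub_cons st | right].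
- have [t st [[rt ka]|[nrt bt]]] := IHb _ hnr.
  + by exists t; [exact: sub_cons st | left].
  + exists (x :: t); first exact: cons_sub st.
    by right; rewrite pairwise_cons (all_filter _ _ st) nrt.
Qed.

Definition homogeneous (r : rel T) (t : seq T) := exists b, pairwise (fun x y => r x y == b) t.

Lemma homogeneous_subseq r t s : subseq t s -> homogeneous r s -> homogeneous r t.
Proof. by move=> st [b hs]; exists b; apply: subseq_pairwise st hs. Qed.

Lemma ramsey_homogeneous (r : rel T) k (s : seq T) : 2 ^ (k + k) <= size s ->
  exists2 t, subseq t s & homogeneous r t /\ k <= size t.
Proof.
move=> /(ramsey_pairwise r) [t st [[rt kt]|[nrt kt]]]; exists t => //; split => //.
  by exists true; apply: sub_pairwise rt => x y ->.
by exists false; apply: sub_pairwise nrt => x y /negbTE ->.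
Qed.

Definition ramsey_bound m k := iter m (fun k => 2 ^ (k + k)) k.

Lemma ramsey_multi (rs : seq (rel T)) k (s : seq T) : ramsey_bound (size rs) k <= size s ->
  exists2 t, subseq t s & k <= size t /\ foldr (fun r P => homogeneous r t /\ P) True rs.
Proof.
elim: rs s => [|r rs IH] s hs; first by exists s.
have [t1 st1 [hom1 kt1]] := ramsey_homogeneous r hs.
have [t st [kt homs]] := IH _ kt1.
exists t; first exact: subseq_trans st st1.
by split=> //=; split=> //; exact: homogeneous_subseq hom1.
Qed.

Lemma pairwise_sym_in (r : rel T) (s : seq T) : symmetric r -> pairwise r s ->
  {in s &, forall x y, x != y -> r x y}.
Proof.
move=> r_sym rs x y xs ys nxy.
have : pairwise (fun x y => (x == y) || r x y) s by apply: sub_pairwise rs => ? ? ->; rewrite orbT.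
rewrite pairwise_all2rel => [/allrelP/(_ x y xs ys)|z|z w]; rewrite ?eqxx //.
  by rewrite (negbTE nxy).
by rewrite eq_sym r_sym.
Qed.

Lemma pairwise_sym_nth (r : rel T) n (s : seq T) x0 : symmetric r -> uniq s -> n <= size s ->
  pairwise r s -> forall i j : 'I_n, i != j -> r (nth x0 s i) (nth x0 s j).
Proof.
move=> r_sym s_uniq ns rs i j nij.
have s_nth (k : 'I_n) : k < size s by apply: leq_trans (ltn_ord k) ns.
by apply: (pairwise_sym_in r_sym rs); rewrite ?mem_nth ?nth_uniq.
Qed.

End Ramsey.

(** * Recognising the forbidden induced subgraphs *)

Lemma induced_sub_trans A B C : induced_sub A B -> induced_sub B C -> induced_sub A C.
Proof.
move=> [f [f_inj fE]] [g [g_inj gE]]; exists (g \o f); split; first exact: inj_comp.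
by move=> x y /=; rewrite gE fE.
Qed.

Lemma gE_neq (G : graph) (x y : G) : gE x y -> x != y.
Proof. by apply: contraTneq => ->; rewrite girr. Qed.

Section Embeddings.
Variables (G : graph) (n : nat).

Lemma Kstar_induced (a b : 'I_n -> G) :
  (forall i j, gE (a i) (a j) = (i != j)) -> (forall i j, gE (b i) (b j) = false) ->
  (forall i j, gE (a i) (b j) = (i == j)) -> (forall i j, a i != b j) ->
  induced_sub (Kstar n) G.
Proof.
move=> aa bb ab anb.
have a_inj : injective a by move=> i j e; apply/eqP; rewrite -ab e ab.
have b_inj : injective b by move=> i j e; apply/eqP; rewrite -ab -e ab.
exists (fun v => match v with inl i => a i | inr i => b i end); split.
  case=> i [] j /= e; rewrite ?(a_inj _ _ e) ?(b_inj _ _ e) //.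
    by move: (anb i j); rewrite e eqxx.
  by move: (anb j i); rewrite e eqxx.
case=> i [] j; rewrite /= /sgrel /=.
all: by rewrite ?aa ?bb ?ab ?andbT ?andbF ?orbF // gsym ab.
Qed.

Lemma K1star_induced (z : G) (a b : 'I_n -> G) :
  (forall i, gE z (a i)) -> (forall i, gE z (b i) = false) -> (forall i, z != b i) ->
  (forall i j, gE (a i) (a j) = false) -> (forall i j, gE (b i) (b j) = false) ->
  (forall i j, gE (a i) (b j) = (i == j)) ->
  induced_sub (K1star n) G.
Proof.
move=> za zb znb aa bb ab.
have a_inj : injective a by move=> i j e; apply/eqP; rewrite -ab e ab.
have b_inj : injective b by move=> i j e; apply/eqP; rewrite -ab -e ab.
have zna i : z != a i by apply: gE_neq.
have anb i j : a i != b j by apply: contraTneq (za i) => ->; rewrite zb.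
exists (fun v => match v with None => z | Some (inl i) => a i | Some (inr i) => b i end).
split.
  case=> [[i|i]|] [[j|j]|] //= e; rewrite ?(a_inj _ _ e) ?(b_inj _ _ e) //; exfalso; move: e.
  - by move=> /eqP; rewrite (negbTE (anb i j)).
  - by move=> /eqP; rewrite eq_sym (negbTE (zna i)).
  - by move=> /eqP; rewrite eq_sym (negbTE (anb j i)).
  - by move=> /eqP; rewrite eq_sym (negbTE (znb i)).
  - by move=> /eqP; rewrite (negbTE (zna j)).
  - by move=> /eqP; rewrite (negbTE (znb j)).
case=> [[i|i]|] [[j|j]|]; rewrite /= /sgrel /=.
all: by rewrite ?girr ?za ?zb ?aa ?bb ?ab ?andbF ?orbF // gsym ?za ?zb ?ab.
Qed.

Lemma CK_induced (a b : 'I_n -> G) :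
  (forall i j, gE (a i) (a j) = (i != j)) -> (forall i j, gE (b i) (b j) = (i != j)) ->
  (forall i j, gE (a i) (b j) = (i == j)) -> (forall i j, a i != b j) ->
  induced_sub (CK n) G.
Proof.
move=> aa bb ab anb.
have a_inj : injective a by move=> i j e; apply/eqP; rewrite -ab e ab.
have b_inj : injective b by move=> i j e; apply/eqP; rewrite -ab -e ab.
exists (fun v => match v with inl i => a i | inr i => b i end); split.
  case=> i [] j /= e; rewrite ?(a_inj _ _ e) ?(b_inj _ _ e) //.
    by move: (anb i j); rewrite e eqxx.
  by move: (anb j i); rewrite e eqxx.
case=> i [] j; rewrite /= /sgrel /=.
all: by rewrite ?aa ?bb ?ab ?andbT ?orbF // gsym ab.
Qed.

Lemma K2n_induced (u p : G) (w : 'I_n -> G) :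
  gE u p = false -> u != p -> (forall i, gE u (w i)) -> (forall i, gE p (w i)) ->
  (forall i j, gE (w i) (w j) = false) -> injective w ->
  induced_sub (K2n n) G.
Proof.
move=> up unp uw pw ww w_inj.
have unw i : u != w i by apply: gE_neq.
have pnw i : p != w i by apply: gE_neq.
exists (fun v => match v with inl k => if val k == 0 then u else p | inr i => w i end); split.
  case=> [[[|[|k]] hk]|i] [[[|[|k']] hk']|j] //= e; try by congr inl; apply: val_inj.
  - by move: unp; rewrite e eqxx.
  - by move: (unw j); rewrite e eqxx.
  - by move: unp; rewrite e eqxx.
  - by move: (pnw j); rewrite e eqxx.
  - by move: (unw i); rewrite e eqxx.
  - by move: (pnw i); rewrite e eqxx.
  - by rewrite (w_inj _ _ e).
case=> [[[|[|k]] hk]|i] [[[|[|k']] hk']|j] //=; rewrite /sgrel /=.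
all: by rewrite ?girr ?uw ?pw ?ww ?andbF // gsym ?uw ?pw ?up.
Qed.

Lemma Pn_induced (f : 'I_n -> G) : injective f ->
  (forall i j : 'I_n, gE (f i) (f j) = (j == i.+1 :> nat) || (i == j.+1 :> nat)) ->
  induced_sub (Pn n) G.
Proof.
move=> f_inj fE; exists f; split => // i j.
rewrite /= /sgrel /P_r fE; case: (eqVneq i j) => [->|//] /=; lia.
Qed.

End Embeddings.

Section Fans.
Variable G : graph.

Definition pendant_fan (z : G) (q : G -> G) (s : seq G) :=
  [/\ uniq s, {in s, forall a, [/\ gE z a, gE a (q a), ~~ gE z (q a) & z != q a]}
    & {in s &, forall a a', a != a' -> ~~ gE a (q a')}].

Lemma pendant_fan_subseq z q s t : subseq t s -> pendant_fan z q s -> pendant_fan z q t.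
Proof.
move=> st [s_uniq fs fq]; have ts := mem_subseq st.
split; first exact: subseq_uniq st s_uniq.
  by move=> a /ts; apply: fs.
by move=> a a' /ts ? /ts ?; apply: fq.
Qed.

Lemma pendant_fan_induced z q s n : pendant_fan z q s -> n <= size s ->
  homogeneous (@gE G) s -> homogeneous (fun a a' => gE (q a) (q a')) s ->
  induced_sub (K1star n) G \/ induced_sub (Kstar n) G \/ induced_sub (CK n) G.
Proof.
move=> [s_uniq fs fq] ns [b1 hom1] [b2 hom2].
pose a (i : 'I_n) := nth z s i; pose b i := q (a i).
have a_in i : a i \in s by apply/mem_nth/(leq_trans (ltn_ord i)).
have a_eq i j : (a i == a j) = (i == j).
  by rewrite nth_uniq // (leq_trans (ltn_ord _) ns).
have [za abii zb znb] : [/\ forall i, gE z (a i), forall i, gE (a i) (b i),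
    forall i, ~~ gE z (b i) & forall i, z != b i].
  by split=> i; case: (fs _ (a_in i)).
have ab i j : gE (a i) (b j) = (i == j).
  case: eqVneq => [->|nij]; first exact: abii.
  by apply/negbTE/fq; rewrite ?a_in ?a_eq.
have anb i j : a i != b j by apply: contraNneq (zb j) => <-.
have homE (r : rel G) c : symmetric r -> irreflexive r ->
    pairwise (fun x y => r x y == c) s -> forall i j, r (a i) (a j) = c && (i != j).
  move=> r_sym r_irr hom i j; case: eqVneq => [->|nij]; first by rewrite r_irr andbF.
  rewrite andbT; apply/eqP; apply: (pairwise_sym_nth z _ s_uniq ns hom nij) => x y.
  by rewrite r_sym.
have aa := homE _ _ (@gsym G) (@girr G) hom1.
have bb := homE (fun x y => gE (q x) (q y)) _ (fun x y => gsym _ _) (fun x => girr _) hom2.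
clear hom1 hom2; case: b1 aa => aa; case: b2 bb => bb.
- by right; right; apply: CK_induced aa bb ab anb.
- by right; left; apply: Kstar_induced aa bb ab anb.
- right; left; apply: (Kstar_induced bb aa).
    by move=> i j; rewrite gsym (ab j i) eq_sym.
  by move=> i j; rewrite eq_sym (anb j i).
- by left; apply: K1star_induced za _ znb aa bb ab => i; apply/negbTE.
Qed.

Lemma hub_K2n_induced z p (s : seq G) n : uniq s -> n <= size s ->
  ~~ gE z p -> z != p -> {in s, forall w, gE z w && gE p w} ->
  pairwise (fun v w => ~~ gE v w) s -> induced_sub (K2n n) G.
Proof.
move=> s_uniq ns zp znp zps s_indep; pose w (i : 'I_n) := nth z s i.
have w_in i : w i \in s by apply/mem_nth/(leq_trans (ltn_ord i)).
apply: (@K2n_induced _ _ z p w) => // [|i|i|i j|i j].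
- exact/negbTE.
- by case/andP: (zps _ (w_in i)).
- by case/andP: (zps _ (w_in i)).
- case: (eqVneq i j) => [->|nij]; first exact: girr.
  apply/negbTE; apply: (pairwise_sym_nth z _ s_uniq ns s_indep nij) => x y.
  by rewrite gsym.
- by move/eqP; rewrite nth_uniq ?(leq_trans (ltn_ord _) ns) // => /eqP/val_inj.
Qed.

End Fans.

(** * Breadth-first layers *)

Section Distance.
Variables (G : graph) (r : G).
Hypothesis G_conn : connected G.

Fixpoint ball k : {set G} :=
  if k is k'.+1 then ball k' :|: [set y | [exists x in ball k', gE x y]] else [set r].

Lemma ball_edge k x y : x \in ball k -> gE x y -> y \in ball k.+1.
Proof. by move=> xk xy; rewrite /= !inE; apply/orP; right; apply/existsP; exists x; rewrite xk. Qed.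

Lemma ball_exists y : exists k, y \in ball k.
Proof.
have /connectP[p p_path ->] := G_conn r y; exists (size p).
elim/last_ind: p p_path => [|p z IHp]; first by rewrite inE.
by rewrite rcons_path last_rcons size_rcons => /andP[/IHp pk]; apply: ball_edge.
Qed.

Definition dist y := ex_minn (ball_exists y).

Lemma dist_ball y : y \in ball (dist y).
Proof. by rewrite /dist; case: ex_minnP. Qed.

Lemma dist_min y k : y \in ball k -> dist y <= k.
Proof. by rewrite /dist; case: ex_minnP => m _ h /h. Qed.

Lemma dist_edge x y : gE x y -> dist y <= (dist x).+1.
Proof. by move=> xy; apply/dist_min/(ball_edge (dist_ball x) xy). Qed.

Lemma dist_root : dist r = 0.
Proof. by apply/eqP; rewrite -leqn0; apply: dist_min; rewrite inE. Qed.

Lemma dist_eq0 y : dist y = 0 -> y = r.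
Proof. by move=> y0; have := dist_ball y; rewrite y0 inE => /eqP. Qed.

Lemma dist_pred y k : dist y = k.+1 -> exists2 x, gE x y & dist x = k.
Proof.
move=> yk; have := dist_ball y; rewrite yk /= !inE => /orP[/dist_min|]; first by rewrite yk ltnn.
case/exists_inP => x /dist_min xk xy; exists x => //.
by have := dist_edge xy; rewrite yk; lia.
Qed.

Definition parent y := odflt y [pick x | gE x y && (dist x == (dist y).-1)].

Lemma parentP y : 0 < dist y -> gE (parent y) y /\ dist (parent y) = (dist y).-1.
Proof.
move=> y_gt0; rewrite /parent; case: pickP => [x /andP[xy /eqP //]|none].
have [x xy xk] := dist_pred (esym (prednK y_gt0)).
by move: (none x); rewrite xy xk eqxx.
Qed.

Lemma dist_iter_parent y m : m <= dist y -> dist (iter m parent y) = dist y - m.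
Proof.
elim: m => [|m IHm] my /=; first by rewrite subn0.
have {}IHm := IHm (ltnW my).
have m_pos : 0 < dist (iter m parent y) by rewrite IHm subn_gt0.
by have [_ ->] := parentP m_pos; rewrite IHm; lia.
Qed.

Lemma induced_path_dist n y : n <= (dist y).+1 -> induced_sub (Pn n) G.
Proof.
move=> ny; pose f (i : 'I_n) := iter (dist y - i) parent y.
have f_dist (i : 'I_n) : dist (f i) = i by rewrite dist_iter_parent; have := ltn_ord i; lia.
have f_parent (i j : 'I_n) : j = i.+1 :> nat -> f i = parent (f j) /\ 0 < dist (f j).
  move=> ji; split; last by rewrite f_dist ji.
  by rewrite /f -iterS; congr iter; have := ltn_ord j; lia.
apply: (@Pn_induced _ _ f) => [i j fij|i j].
  by apply: ord_inj; rewrite -f_dist fij f_dist.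
case: (eqVneq (j : nat) i.+1) => [/f_parent[-> /parentP[]]|ji] //=.
case: (eqVneq (i : nat) j.+1) => [/f_parent[-> /parentP[]]|ij] //=; first by rewrite gsym.
case: (eqVneq i j) => [->|nij]; first by rewrite girr.
have {}nij : (i : nat) != j by [].
apply/negbTE/negP => fij; have fji : gE (f j) (f i) by rewrite gsym.
by move: (dist_edge fij) (dist_edge fji); rewrite !f_dist; lia.
Qed.
End Distance.

(** * Sets with few neighbours at every vertex *)

Lemma card_bigcup_le (I T : finType) (F : {set I}) (A : I -> {set T}) :
  #|\bigcup_(i in F) A i| <= \sum_(i in F) #|A i|.
Proof.
elim/big_rec2: _ => [|i m U _ le]; first by rewrite cards0.
by rewrite (leq_trans (leq_card_setU _ _).1) ?leq_add2l.
Qed.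

Lemma minimal_cover (I T : finType) (C : {set I}) (A : I -> {set T}) (U : {set T}) :
  U \subset \bigcup_(c in C) A c ->
  exists F : {set I}, [/\ F \subset C, U \subset \bigcup_(c in F) A c &
    forall c, c \in F -> exists2 y, y \in U & y \in A c /\
      forall c', c' \in F -> c' != c -> y \notin A c'].
Proof.
move=> UC; pose cover (F : {set I}) := (F \subset C) && (U \subset \bigcup_(c in F) A c).
have coverC : cover C by rewrite /cover subxx.
have [F /andP[FC UF] F_min] := arg_minnP (fun F : {set I} => #|F|) coverC.
exists F; split=> // c cF.
pose private y := (y \in A c) && [forall c' in F, (c' != c) ==> (y \notin A c')].
have [/exists_inP[y yU /andP[yc y_priv]]|no_private] := boolP [exists y in U, private y].
  by exists y => //; split=> // c' c'F c'c; move/forall_inP/(_ c' c'F)/implyP: y_priv; apply.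
have /F_min : cover (F :\ c).
  rewrite /cover (subset_trans (subsetDl _ _)) //=; apply/subsetP => y yU.
  have /bigcupP[c0 c0F yc0] := subsetP UF y yU.
  have [c0c|c0c] := eqVneq c0 c; last by apply/bigcupP; exists c0; rewrite // !inE c0c.
  have : ~~ private y by apply: contra no_private => py; apply/exists_inP; exists y.
  rewrite /private -c0c yc0 /= => /forall_inPn[c' c'F].
  by rewrite negb_imply negbK => /andP[c'c yc']; apply/bigcupP; exists c'; rewrite // !inE c'c.
by rewrite (cardsD1 c F) cF /=; lia.
Qed.

Section SparseSetBound.
Variables (G : graph) (r : G).
Hypothesis G_conn : connected G.
Variables (n D : nat) (X : {set G}).
Hypothesis X_deg : forall x : G, #|[set y in X | gE x y]| < D.
Hypothesis noPn : ~ induced_sub (Pn n) G.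
Hypothesis noKstar : ~ induced_sub (Kstar n) G.
Hypothesis noK1star : ~ induced_sub (K1star n) G.
Hypothesis noCK : ~ induced_sub (CK n) G.

Local Notation dist := (dist r G_conn).

Definition child (x y : G) := gE x y && (dist y == (dist x).+1).
Definition desc (x : G) := [set y in X | connect child x y].

Lemma desc_child x c : child x c -> desc c \subset desc x.
Proof.
move=> xc; apply/subsetP => y; rewrite !inE => /andP[-> cy].
exact: connect_trans (connect1 xc) cy.
Qed.

Lemma desc_split x y : y \in desc x -> y != x -> exists2 c, child x c & y \in desc c.
Proof.
rewrite inE => /andP[yX /connectP[[|c p] /= p_path y_last]]; first by rewrite y_last eqxx.
case/andP: p_path => xc p_path _; exists c => //.
by rewrite inE yX; apply/connectP; exists p.
Qed.

Lemma desc_root : desc r = X.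
Proof.
apply/setP => y; rewrite inE andb_idr // => _.
elim: {y}(dist y) {-2}y (erefl (dist y)) => [|k IHk] y yk.
  by rewrite (dist_eq0 yk) connect0.
have [x xy xk] := dist_pred yk.
by apply: connect_trans (IHk x xk) (connect1 _); rewrite /child xy xk yk eqxx.
Qed.

Lemma dist_bound y : (dist y).+2 <= n.
Proof. by rewrite ltnNge; apply: contra_notN noPn; apply: induced_path_dist. Qed.

Let K := ramsey_bound 2 n.

(* Chosen so that a vertex at depth t with at least [threshold t] descendants in
   [X], all of whose children have fewer than [threshold t.+1], has more than
   [K + D] children (depth stays below [n.-1]). *)
Definition threshold t := iter (n.-1 - t) (fun m => (K + D) * m + 1) 1.

Lemma threshold_S t : t < n.-1 -> threshold t = (K + D) * threshold t.+1 + 1.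
Proof. by move=> tn; rewrite /threshold (_ : n.-1 - t = (n.-1 - t.+1).+1) //; lia. Qed.

Lemma threshold_gt0 t : 0 < threshold t.
Proof. by rewrite /threshold; case: (n.-1 - t) => //= m; rewrite addn1. Qed.

Lemma heavy_vertex : threshold 0 <= #|X| -> exists x, [/\ threshold (dist x) <= #|desc x|,
  dist x < n.-1 & forall c, child x c -> #|desc c| < threshold (dist x).+1].
Proof.
move=> X_large; pose heavy y := threshold (dist y) <= #|desc y|.
have heavy_r : heavy r by rewrite /heavy dist_root desc_root.
have [x x_heavy x_max] := arg_maxnP dist heavy_r.
exists x; split=> // [|c /andP[_ /eqP xc]].
  by have := dist_bound x; lia.
rewrite ltnNge; apply/negP => c_heavy.
by have := x_max c; rewrite /heavy xc c_heavy => /(_ isT); lia.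
Qed.

Lemma children_cover_large x (F : {set G}) :
  threshold (dist x) <= #|desc x| -> dist x < n.-1 ->
  (forall c, child x c -> #|desc c| < threshold (dist x).+1) ->
  {in F, forall c, child x c} -> desc x :\ x \subset \bigcup_(c in F) desc c ->
  K + D < #|F|.
Proof.
move=> x_heavy x_depth light Fx UF.
have := threshold_gt0 (dist x).+1; set m := threshold _.+1 => m_pos.
have U_large : (K + D) * m <= #|desc x :\ x|.
  by move: x_heavy; rewrite threshold_S // (cardsD1 x (desc x)); case: (x \in desc x); lia.
have U_small : #|desc x :\ x| <= #|F| * m.-1.
  apply: leq_trans (subset_leq_card UF) _; apply: leq_trans (card_bigcup_le _ _) _.
  by rewrite -sum_nat_const; apply: leq_sum => c /Fx /light; lia.
have D_pos : 0 < D by apply: leq_ltn_trans (X_deg r).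
move: U_large U_small; case: m m_pos => // m _; rewrite succnK; nia.
Qed.

Lemma fan_in_tree : threshold 0 <= #|X| -> exists (x : G) q s, pendant_fan x q s /\ K <= size s.
Proof.
move=> /heavy_vertex[x [x_heavy x_depth light]].
have cover : desc x :\ x \subset \bigcup_(c in [set c | child x c]) desc c.
  apply/subsetP => y; rewrite in_setD1 => /andP[yx /desc_split[//|c xc yc]].
  by apply/bigcupP; exists c; rewrite // inE.
have [F [FC UF F_priv]] := minimal_cover cover.
have Fx : {in F, forall c, child x c} by move=> c /(subsetP FC); rewrite inE.
have F_large := children_cover_large x_heavy x_depth light Fx UF.
have FX_small : #|F :&: X| < D.
  apply: leq_ltn_trans (X_deg x); apply/subset_leq_card/subsetP => c.
  by rewrite !inE => /andP[/Fx /andP[-> _] ->].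
pose S := F :\: X.
have /fin_all_exists[q qP] c : exists q, c \in S -> child c q /\
    exists2 y, y \in desc q & forall c', c' \in F -> c' != c -> y \notin desc c'.
  have [cS|] := boolP (c \in S); last by exists c.
  have [cX cF] : c \notin X /\ c \in F by move: cS; rewrite inE => /andP[].
  have [y _ [yc y_priv]] := F_priv c cF.
  (* [y \in X] but [c \notin X], so [y] lies strictly below [c] *)
  have [|q cq yq] := desc_split yc.
    by apply: contraNneq cX => <-; move: yc; rewrite inE => /andP[].
  by exists q => _; split=> //; exists y.
have SF c : c \in S -> c \in F by rewrite inE => /andP[].
have dist_S c : c \in S -> dist c = (dist x).+1 /\ dist (q c) = (dist x).+2.
  move=> cS; have [/andP[_ /eqP ->] _] := qP c cS.
  by have /andP[_ /eqP ->] := Fx c (SF c cS).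
exists x, q, (enum S); split; last by rewrite -cardE /S; have := cardsID X F; lia.
split; first exact: enum_uniq.
  move=> c; rewrite mem_enum => cS; have [dc dq] := dist_S c cS.
  have [/andP[cq _] _] := qP c cS; have /andP[xc _] := Fx c (SF c cS).
  split=> //; first by apply/negP => /(dist_edge r G_conn); rewrite dq; lia.
  by apply/negP => /eqP xq; move: dq; rewrite -xq; lia.
move=> c c'; rewrite !mem_enum => cS c'S cc'; apply/negP => c_qc'.
have [[dc _] [_ dq']] := (dist_S c cS, dist_S c' c'S).
have [_ [y yq' y_priv]] := qP c' c'S.
have c_child : child c (q c') by rewrite /child c_qc' dc dq' eqxx.
by move: (y_priv c (SF c cS) cc'); rewrite (subsetP (desc_child c_child) y yq').
Qed.

Lemma sparse_set_bound : #|X| < threshold 0.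
Proof.
rewrite ltnNge; apply/negP => /fan_in_tree[x [q [s [s_fan s_large]]]].
have [t ts [nt [hom1 [hom2 _]]]] :=
  @ramsey_multi _ [:: @gE G; fun a a' => gE (q a) (q a')] n s s_large.
have := pendant_fan_induced (pendant_fan_subseq ts s_fan) nt hom1 hom2.
by case=> [|[|]].
Qed.

End SparseSetBound.

(** * Vertices with disconnected neighbourhood *)

Lemma nbhd_rel_sym (G : graph) (v : G) : symmetric (nbhd_rel v).
Proof. by move=> x y; rewrite /nbhd_rel gsym; case: (x \in nbhd v); case: (y \in nbhd v). Qed.

Section DetachedNeighbour.
Variables (G : graph) (u : G).

Definition detached_nbr (v : G) :=
  odflt v [pick p | (p \in nbhd v) && ~~ connect (nbhd_rel v) u p].

Variable v : G.
Hypotheses (uv : gE u v) (v_multi : multi_comp_nbhd v).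

Lemma detached_nbrP : (detached_nbr v \in nbhd v) && ~~ connect (nbhd_rel v) u (detached_nbr v).
Proof.
rewrite /detached_nbr; case: pickP => [p //|none] /=; exfalso.
have u_conn w : w \in nbhd v -> connect (nbhd_rel v) u w.
  by move=> wv; move: (none w); rewrite wv => /negbFE.
case/existsP: v_multi => a /existsP[b /and3P[av bv /negP]]; apply.
apply: connect_trans (u_conn b bv).
by rewrite (sym_connect_sym (nbhd_rel_sym v)) u_conn.
Qed.

Local Notation p := (detached_nbr v).

Lemma detached_nbr_adj : gE v p.
Proof. by case/andP: detached_nbrP; rewrite inE. Qed.

Lemma detached_nbr_nadj : ~~ gE u p.
Proof.
case/andP: detached_nbrP => pv; apply: contra => up.
by apply: connect1; rewrite /nbhd_rel up pv inE gsym uv.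
Qed.

Lemma detached_nbr_neq : u != p.
Proof. by case/andP: detached_nbrP => _; apply: contraNneq => <-; rewrite connect0. Qed.

Lemma detached_nbr_common w : gE v w -> gE u w -> ~~ gE w p.
Proof.
move=> vw uw; case/andP: detached_nbrP => pv; apply: contra => wp.
have wv : w \in nbhd v by rewrite inE.
apply: connect_trans (connect1 (_ : nbhd_rel v u w)) (connect1 (_ : nbhd_rel v w p)).
  by rewrite /nbhd_rel uw wv inE gsym uv.
by rewrite /nbhd_rel wp wv.
Qed.

End DetachedNeighbour.

Section MultiCompNeighbours.
Variables (G : graph) (n : nat) (u : G).
Hypothesis noKstar : ~ induced_sub (Kstar n) G.
Hypothesis noK1star : ~ induced_sub (K1star n) G.
Hypothesis noCK : ~ induced_sub (CK n) G.
Hypothesis noK2n : ~ induced_sub (K2n n) G.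

Local Notation p := (detached_nbr u).

Lemma detached_fan_contra t : uniq t -> n <= size t ->
  {in t, forall v, gE u v /\ multi_comp_nbhd v} ->
  homogeneous (@gE G) t -> homogeneous (fun v w => gE (p v) (p w)) t ->
  {in t &, forall v w, v != w -> ~~ gE v (p w)} -> False.
Proof.
move=> t_uniq nt tW hom1 hom2 cross; have t_fan : pendant_fan u p t.
  split=> // v /tW [uv vm]; split; rewrite ?detached_nbr_neq ?detached_nbr_nadj //.
  exact: detached_nbr_adj.
by case: (pendant_fan_induced t_fan nt hom1 hom2) => [|[|]].
Qed.

Lemma detached_hub_contra v s : gE u v -> multi_comp_nbhd v -> uniq s -> n <= size s ->
  {in s, forall w, gE u w} -> pairwise (fun w w' => ~~ gE w w') s ->
  all (fun w => gE (p v) w == true) s -> False.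
Proof.
move=> uv vm s_uniq ns us s_indep /allP pv_s; apply: noK2n.
apply: (@hub_K2n_induced _ u (p v) s n s_uniq ns) => // [||w ws].
- exact: detached_nbr_nadj.
- exact: detached_nbr_neq.
- by rewrite us //; apply/eqP; apply: pv_s.
Qed.

Lemma multi_comp_nbrs_bound : #|[set v | multi_comp_nbhd v && gE u v]| < ramsey_bound 4 n.+1.
Proof.
set W := [set v | _]; rewrite ltnNge cardE; apply/negP => W_large.
have [t tW [nt [[b1 hom1] [hom2 [[b3 hom3] [[b4 hom4] _]]]]]] :=
  @ramsey_multi _ [:: @gE G; fun v w => gE (p v) (p w); fun v w => gE (p v) w;
                      fun v w => gE (p w) v] n.+1 _ W_large.
have t_uniq : uniq t := subseq_uniq tW (enum_uniq _).
have tW' v : v \in t -> gE u v /\ multi_comp_nbhd v.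
  by move/(mem_subseq tW); rewrite mem_enum inE => /andP[].
have fan_t (b : bool) : pairwise (fun v w => gE v w == b) t ->
    {in t &, forall v w, v != w -> ~~ gE v (p w)} -> False.
  by move=> hom; apply: detached_fan_contra t_uniq (ltnW nt) tW' (ex_intro _ b hom) hom2.
case: b1 hom1 => hom1.
  apply: (fan_t true hom1) => v w vt wt vw; have [uw wm] := tW' w wt.
  apply: detached_nbr_common => //; last by case: (tW' v vt).
  have hom_sym : symmetric (fun x y : G => gE x y == true) by move=> x y; rewrite gsym.
  by apply/eqP; apply: (pairwise_sym_in hom_sym hom1); rewrite // eq_sym.
have hub v s : v \in t -> subseq s t -> n <= size s -> all (fun w => gE (p v) w == true) s ->
    False.
  move=> vt st ns; have [uv vm] := tW' v vt.
  apply: (detached_hub_contra uv vm (subseq_uniq st t_uniq) ns).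
    by move=> w /(mem_subseq st)/tW' [].
  by apply: sub_pairwise (subseq_pairwise st hom1) => x y /eqP ->.
(* With independent spokes, a [p v] seeing all later (or all earlier) spokes is
   the second hub of a K_{2,n} *)
case: b3 hom3 => hom3.
  case: t tW nt t_uniq tW' hom3 hub {fan_t hom1 hom2 hom4} => // v s _ nt _ _ /andP[hv _].
  by move=> /(_ v s); apply; rewrite ?mem_head ?subseq_cons.
case: b4 hom4 => hom4.
  case/lastP: t tW nt t_uniq tW' hom4 hub {fan_t hom1 hom2 hom3} => // s v _ nt _ _.
  rewrite pairwise_rcons => /andP[hv _] /(_ v s).
  by apply; rewrite ?mem_rcons ?mem_head ?subseq_rcons //; rewrite size_rcons in nt.
apply: (fan_t false hom1) => v w vt wt vw.
have hom34 : pairwise (fun x y => (gE (p x) y == false) && (gE (p y) x == false)) t.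
  by rewrite pairwise_relI hom3 hom4.
have sym34 : symmetric (fun x y => (gE (p x) y == false) && (gE (p y) x == false)).
  by move=> x y; rewrite andbC.
by have /andP[_ /eqP] := pairwise_sym_in sym34 hom34 vt wt vw; rewrite gsym => ->.
Qed.
End MultiCompNeighbours.

Lemma special_free_bounded n : exists c, forall G : graph, connected G ->
  (forall F, special_family n F -> ~ induced_sub F G) ->
  #|[set v : G | multi_comp_nbhd v]| < c.
Proof.
exists (threshold n (ramsey_bound 4 n.+1) 0) => G G_conn no_special.
have [noP noKs noK1 noK2 noCK] : [/\ ~ induced_sub (Pn n) G, ~ induced_sub (Kstar n) G,
    ~ induced_sub (K1star n) G, ~ induced_sub (K2n n) G & ~ induced_sub (CK n) G].
  by split; apply: no_special; rewrite /special_family; tauto.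
set X := [set v : G | _].
have X_deg x : #|[set y in X | gE x y]| < ramsey_bound 4 n.+1.
  rewrite (_ : [set y in X | _] = [set y | multi_comp_nbhd y && gE x y]).
    exact: multi_comp_nbrs_bound.
  by apply/setP => y; rewrite !inE.
have [->|[r _]] := set_0Vmem X; first by rewrite cards0 threshold_gt0.
exact: (sparse_set_bound r G_conn X_deg noP noKs noK1 noCK).
Qed.

(** * The six graphs *)

Lemma multi_comp_isolated_nbr (G : graph) (v a b : G) : gE v a -> gE v b -> a != b ->
  (forall y, gE v y -> ~~ gE a y) -> multi_comp_nbhd v.
Proof.
move=> va vb ab a_isol; apply/existsP; exists a; apply/existsP; exists b.
rewrite !inE va vb /=; apply: contra ab => /connectP[[|y p] /= p_path ->] //.
by case/andP: p_path => /and3P[ay _]; rewrite inE => /a_isol; rewrite ay.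
Qed.

Lemma connected_from (G : graph) (h : G) : (forall x, connect (@gE G) h x) -> connected G.
Proof.
move=> h_conn x y; apply: connect_trans (h_conn y).
by rewrite (sym_connect_sym (@gsym G)).
Qed.

Lemma card_multi_comp_ge (G : graph) k (f : 'I_k -> G) : injective f ->
  (forall i, multi_comp_nbhd (f i)) -> k <= #|[set v : G | multi_comp_nbhd v]|.
Proof.
move=> f_inj f_multi; rewrite -[k]card_ord -(card_imset _ f_inj).
by apply/subset_leq_card/subsetP => _ /imsetP[i _ ->]; rewrite inE.
Qed.

Lemma ord_other k (i : 'I_k.+2) : exists j : 'I_k.+2, i != j.
Proof. by exists (if i == ord0 then ord_max else ord0); case: (eqVneq i ord0) => [->|]. Qed.

Section SpecialGraphs.
Variable c : nat.
Local Notation m := c.+2.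


Lemma Kstar_many_multi_comp :
  connected (Kstar m) /\ c <= #|[set v : Kstar m | multi_comp_nbhd v]|.
Proof.
have hub (i : 'I_m) : connect (@gE (Kstar m)) (inl ord0) (inl i).
  case: (eqVneq i ord0) => [->|i0]; first exact: connect0.
  by apply: connect1; rewrite /= /sgrel /= eq_sym i0.
split.
  apply: (@connected_from (Kstar m) (inl ord0)) => -[i|i] //.
  by apply: connect_trans (hub i) (connect1 _); rewrite /= /sgrel /= eqxx.
apply: leq_trans (leqW (leqnSn c)) (@card_multi_comp_ge (Kstar m) m inl inl_inj _) => i.
have [j ij] := ord_other i.
apply: (@multi_comp_isolated_nbr (Kstar m) (inl i) (inr i) (inl j)) => //.
- by rewrite /= /sgrel /= eqxx.
- by rewrite /= /sgrel /= ij.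
by case=> k; rewrite /= /sgrel /= ?andbF // andbT eq_sym.
Qed.

Lemma K1star_many_multi_comp :
  connected (K1star m) /\ c <= #|[set v : K1star m | multi_comp_nbhd v]|.
Proof.
split.
  apply: (@connected_from (K1star m) None) => -[[i|i]|]; rewrite ?connect0 //.
    exact: connect1.
  apply: (@connect_trans _ _ (Some (inl i) : K1star m)); apply: connect1 => //.
  by rewrite /= /sgrel /= eqxx.
apply: leq_trans (leqW (leqnSn c))
  (@card_multi_comp_ge (K1star m) m (Some \o inl) (inj_comp Some_inj inl_inj) _) => i.
apply: (@multi_comp_isolated_nbr (K1star m) (Some (inl i)) (Some (inr i)) None) => //.
  by rewrite /= /sgrel /= eqxx.
by case=> [[k|k]|]; rewrite /= /sgrel /= ?andbF.
Qed.

Lemma K2n_many_multi_comp :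
  connected (K2n m) /\ c <= #|[set v : K2n m | multi_comp_nbhd v]|.
Proof.
split.
  apply: (@connected_from (K2n m) (inl ord0)) => -[k|j]; last exact: connect1.
  by apply: (@connect_trans _ _ (inr ord0 : K2n m)); apply: connect1.
apply: leq_trans (leqW (leqnSn c)) (@card_multi_comp_ge (K2n m) m inr inr_inj _) => i.
apply: (@multi_comp_isolated_nbr (K2n m) (inr i) (inl ord0) (inl ord_max)) => //.
by case=> k; rewrite /= /sgrel /= ?andbF.
Qed.

Lemma CK_many_multi_comp :
  connected (CK m) /\ c <= #|[set v : CK m | multi_comp_nbhd v]|.
Proof.
have hub (i : 'I_m) : connect (@gE (CK m)) (inl ord0) (inl i).
  case: (eqVneq i ord0) => [->|i0]; first exact: connect0.
  by apply: connect1; rewrite /= /sgrel /= eq_sym i0.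
split.
  apply: (@connected_from (CK m) (inl ord0)) => -[i|i] //.
  by apply: connect_trans (hub i) (connect1 _); rewrite /= /sgrel /= eqxx.
apply: leq_trans (leqW (leqnSn c)) (@card_multi_comp_ge (CK m) m inl inl_inj _) => i.
have [j ij] := ord_other i.
apply: (@multi_comp_isolated_nbr (CK m) (inl i) (inr i) (inl j)) => //.
- by rewrite /= /sgrel /= eqxx.
- by rewrite /= /sgrel /= ij.
by case=> k; rewrite /= /sgrel /=; case: (eqVneq i k) => [->|]; rewrite ?eqxx ?andbF.
Qed.

Lemma Tn_many_multi_comp :
  connected (Tn m) /\ c <= #|[set v : Tn m | multi_comp_nbhd v]|.
Proof.
split.
  apply: (@connected_from (Tn m) None) => -[[k|j]|]; rewrite ?connect0 //; last exact: connect1.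
  by apply: (@connect_trans _ _ (Some (inr ord0) : Tn m)); apply: connect1.
apply: leq_trans (leqW (leqnSn c))
  (@card_multi_comp_ge (Tn m) m (Some \o inr) (inj_comp Some_inj inr_inj) _) => i.
apply: (@multi_comp_isolated_nbr (Tn m) (Some (inr i)) None (Some (inl i))) => //.
by case=> [[k|k]|]; rewrite /= /sgrel /= ?andbF.
Qed.

Lemma Pn_edge (x y : Pn m) : gE x y = (y == x.+1 :> nat) || (x == y.+1 :> nat).
Proof. by rewrite /= /sgrel /P_r; case: (eqVneq x y) => [->|] /=; lia. Qed.

Lemma Pn_many_multi_comp :
  connected (Pn m) /\ c <= #|[set v : Pn m | multi_comp_nbhd v]|.
Proof.
split.
  apply: (@connected_from (Pn m) ord0) => -[k km].
  elim: k km => [|k IHk] km; first by rewrite (_ : Ordinal km = ord0) ?connect0 //; apply: val_inj.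
  by apply: connect_trans (IHk (ltnW km)) (connect1 _); rewrite Pn_edge /= eqxx.
pose f (k : 'I_c) : Pn m := inord k.+1.
have f_val (k : 'I_c) : f k = k.+1 :> nat by rewrite inordK //; have := ltn_ord k; lia.
have f_inj : injective f by move=> k l /(congr1 (@nat_of_ord _)); rewrite !f_val => -[] /val_inj.
apply: (card_multi_comp_ge f_inj) => k; have kc := ltn_ord k.
apply: (@multi_comp_isolated_nbr (Pn m) (f k) (inord k) (inord k.+2)).
- by rewrite Pn_edge f_val !inordK //; lia.
- by rewrite Pn_edge f_val !inordK //; lia.
- by apply/eqP => /(congr1 (@nat_of_ord _)); rewrite !inordK //; lia.
by move=> y; rewrite !Pn_edge f_val !inordK //; lia.
Qed.

End SpecialGraphs.

Lemma special_family_many_multi_comp c G : special_family c.+2 G ->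
  connected G /\ c <= #|[set v : G | multi_comp_nbhd v]|.
Proof.
case=> [->|[->|[->|[->|[->|->]]]]].
- exact: Kstar_many_multi_comp.
- exact: K1star_many_multi_comp.
- exact: Pn_many_multi_comp.
- exact: K2n_many_multi_comp.
- exact: CK_many_multi_comp.
- exact: Tn_many_multi_comp.
Qed.

Unset Implicit Arguments.

Theorem theorem1p6 (H : gfamily) :
  (exists c : nat, forall G : graph, connected G -> Hfree H G ->
      #|[set v : G | multi_comp_nbhd v]| < c)
  <->
  (exists n : nat, 0 < n /\ family_le H (special_family n)).
Proof.
split.
- move=> [c bounded]; exists c.+2; split=> // F /special_family_many_multi_comp[F_conn F_many].
  apply: NNPP => no_sub.
  have F_free : Hfree H F by move=> H1 HH1 H1_F; apply: no_sub; exists H1.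
  by have := bounded F F_conn F_free; rewrite ltnNge F_many.
- move=> [n [_ H_le]]; have [c bounded] := special_free_bounded n.
  exists c => G G_conn G_free; apply: bounded => // F F_special F_G.
  have [H1 HH1 H1_F] := H_le F F_special.
  exact: G_free H1 HH1 (induced_sub_trans H1_F F_G).
Qed.
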